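(* Let $d,n\ge 1$, let $\kappa\ge1$ divide $d$, and set $d'=d/\kappa$. Let $A_1,\dots,A_{d'}\in\mathbb{R}^{m\times n^\kappa}$ and $\mathcal{A}(\mathcal{Y})=\mathcal{Y}\times_1A_1\times_2\cdots\times_{d'}A_{d'}$. Suppose each $A_i$ has the RIP$(\varepsilon,\mathcal{S}_{1,2})$ property. Let $\delta=\max\{(1+\varepsilon)^d-1,\,1-(1-\varepsilon)^d\}$ and assume $\delta<1$. Then for all $\mathcal{X}\in\mathbb{R}^{n\times\cdots\times n}$ ($d$ modes) with HOSVD rank $(1,\dots,1)$, $$(1-\delta)\|\mathcal{X}\|^2\le\|\mathcal{A}(\mathcal{R}(\mathcal{X}))\|^2\le(1+\delta)\|\mathcal{X}\|^2.$$
   Context: $\|\cdot\|$ is the Frobenius norm. The $j$-mode product of $\mathcal{X}\in\mathbb{R}^{p_1\times\cdots\times p_D}$ with $U\in\mathbb{R}^{q\times p_j}$ has entries $(\mathcal{X}\times_jU)_{i_1,\dots,\ell,\dots,i_D}=\sum_{i_j}\mathcal{X}_{i_1,\dots,i_j,\dots,i_D}U_{\ell,i_j}$. HOSVD rank $(1,\dots,1)$ means $\mathcal{X}=c\,\mathbf{u}^1\circ\cdots\circ\mathbf{u}^d$ (nonzero rank-one). The reshaping operator $\mathcal{R}$ is the linear map with $\mathcal{R}(\mathbf{x}^1\circ\cdots\circ\mathbf{x}^d)=\bigcirc_{i=1}^{d'}(\mathbf{x}^{\kappa(i-1)+1}\otimes\cdots\otimes\mathbf{x}^{\kappa i})$ ($\circ$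 outer product, $\otimes$ Kronecker product). $\mathcal{S}_1=\{\mathbf{u}^1\otimes\cdots\otimes\mathbf{u}^\kappa:\mathbf{u}^i\in\mathbb{S}^{n-1}\}$, $\mathcal{S}_2=\{(\mathbf{x}+\mathbf{y})/\|\mathbf{x}+\mathbf{y}\|_2:\mathbf{x},\mathbf{y}\in\mathcal{S}_1,\langle\mathbf{x},\mathbf{y}\rangle=0\}$, $\mathcal{S}_{1,2}=\mathcal{S}_1\cup\mathcal{S}_2$. A linear map $L$ has RIP$(\varepsilon,\mathcal{S})$ if $(1-\varepsilon)\|s\|^2\le\|Ls\|^2\le(1+\varepsilon)\|s\|^2$ for all $s\in\mathcal{S}$. *)

From HB Require Import structures.
From mathcomp Require Import all_boot all_order all_algebra.
Set Implicit Arguments. Unset Strict Implicit. Unset Printing Implicit Defensive.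
Import Order.TTheory GRing.Theory Num.Theory.
Local Open Scope ring_scope.

Definition tensor (R : Type) (D p : nat) := {ffun {ffun 'I_D -> 'I_p} -> R}.

Section Defs.
Variable R : rcfType.

Definition vsqnorm (N : nat) (v : 'cV[R]_N) : R := \sum_(i < N) (v i 0) ^+ 2.

Definition tsqnorm (D p : nat) (X : tensor R D p) : R := \sum_I (X I) ^+ 2.

(* Kronecker (row-major, first factor most significant) linear index of
   (j_0, ..., j_{k-1}) in {0, ..., n^k - 1} *)
Definition kidx (k n : nat) (j : {ffun 'I_k -> 'I_n}) : nat :=
  (\sum_(t < k) val (j t) * n ^ (k.-1 - t))%N.

Definition kron (k n : nat) (x : 'I_k -> 'cV[R]_n) : 'cV[R]_(n ^ k) :=
  \col_(r < n ^ k) \sum_(j : {ffun 'I_k -> 'I_n})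
      (if val r == kidx j then \prod_(t < k) x t (j t) 0 else 0).

Definition S1 (k n : nat) : 'cV[R]_(n ^ k) -> Prop := fun v =>
  exists x : 'I_k -> 'cV[R]_n, (forall t, vsqnorm (x t) = 1) /\ v = kron x.

Definition S2 (k n : nat) : 'cV[R]_(n ^ k) -> Prop := fun v =>
  exists x y, S1 x /\ S1 y /\ (x^T *m y) 0 0 = 0 /\
    v = (Num.sqrt (vsqnorm (x + y)))^-1 *: (x + y).

Definition S12 (k n : nat) : 'cV[R]_(n ^ k) -> Prop := fun v => S1 v \/ S2 v.

Definition RIP (m N : nat) (A : 'M[R]_(m, N)) (eps : R) (S : 'cV[R]_N -> Prop) :=
  forall s, S s ->
    (1 - eps) * vsqnorm s <= vsqnorm (A *m s) <= (1 + eps) * vsqnorm s.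

(* HOSVD rank (1,...,1): X = c u^1 o ... o u^D, nonzero *)
Definition hosvd_rank1 (D n : nat) (X : tensor R D n) : Prop :=
  X != 0 /\ exists (c : R) (u : 'I_D -> 'cV[R]_n),
    forall I, X I = c * \prod_(a < D) u a (I a) 0.

(* value of entry k of a multi-index (0 outside range) *)
Definition Inat (D n : nat) (I : {ffun 'I_D -> 'I_n}) (k : nat) : nat :=
  if insub k is Some a then val (I a) else 0%N.

(* I (a d-mode index) corresponds to J (a d'-mode index of the reshaped
   tensor): mode i of J is the Kronecker index of modes i*kappa, ...,
   i*kappa + kappa - 1 of I. *)
Definition reshape_match (d kappa n d' : nat)
    (I : {ffun 'I_d -> 'I_n}) (J : {ffun 'I_d' -> 'I_(n ^ kappa)}) : bool :=
  [forall i : 'I_d', val (J i) ==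
     (\sum_(t < kappa) Inat I (i * kappa + t) * n ^ (kappa.-1 - t))%N].

(* reshaping operator R : R^{n x ... x n} (d modes) -> R^{n^k x ... x n^k}
   (d' = d / kappa modes); linear, and maps x^1 o ... o x^d to
   o_i (x^{kappa(i-1)+1} (x) ... (x) x^{kappa i}). *)
Definition treshape (d kappa n : nat) (X : tensor R d n) :
    tensor R (d %/ kappa) (n ^ kappa) :=
  [ffun J : {ffun 'I_(d %/ kappa) -> 'I_(n ^ kappa)} => \sum_(I : {ffun 'I_d -> 'I_n}) (if @reshape_match d kappa n (d %/ kappa) I J then X I else 0)].

(* A(Y) = Y x_1 A_1 x_2 ... x_{d'} A_{d'} (iterated mode products, unfolded) *)
Definition Aop (D N m : nat) (A : 'I_D -> 'M[R]_(m, N)) (Y : tensor R D N) :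
    tensor R D m :=
  [ffun L : {ffun 'I_D -> 'I_m} => \sum_(J : {ffun 'I_D -> 'I_N}) Y J * \prod_(i < D) A i (L i) (J i)].

End Defs.

From HB Require Import structures.
From mathcomp Require Import all_boot all_order all_algebra.
From mathcomp Require Import zify lra.
Import Order.TTheory GRing.Theory Num.Theory.
Set Implicit Arguments. Unset Strict Implicit. Unset Printing Implicit Defensive.
Local Open Scope ring_scope.

(* For X = c u^1 o ... o u^d, both the reshaping and the mode products
   preserve rank one: A(R(X)) = c (A_1 w_1) o ... o (A_d' w_d'), where w_i is
   the Kronecker product of the i-th block of kappa factors.  Hence
   ||X||^2 = c^2 prod_i ||w_i||^2 and ||A(R(X))||^2 = c^2 prod_i ||A_i w_i||^2.
   Each w_i is a rescaled element of S_1 (only this half of S_{1,2} is used),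
   so ||A_i w_i||^2 lies within a factor 1 -+ eps of ||w_i||^2, and the product
   within (1 -+ eps)^d'.  As S_1 contains unit vectors, eps >= 0, and delta < 1
   forces eps < 1; since d' <= d this gives the bounds 1 -+ delta. *)

Lemma kidxS (k n : nat) (j : {ffun 'I_k.+1 -> 'I_n}) :
  kidx j = (j ord0 * n ^ k + kidx [ffun t : 'I_k => j (lift ord0 t)])%N.
Proof.
rewrite /kidx big_ord_recl /= subn0; congr (_ + _)%N.
by apply: eq_bigr => t _; rewrite ffunE /bump /= subnDA subn1.
Qed.

Lemma kidx_lt (k n : nat) (j : {ffun 'I_k -> 'I_n}) : (kidx j < n ^ k)%N.
Proof.
elim: k j => [|k IH] j; first by rewrite /kidx big_ord0.
rewrite kidxS expnS.
have := IH [ffun t : 'I_k => j (lift ord0 t)].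
have : (j ord0 < n)%N := ltn_ord _.
set a := kidx _; set b := nat_of_ord _ => lt_b_n lt_a.
have : (b.+1 * n ^ k <= n * n ^ k)%N by rewrite leq_mul2r lt_b_n orbT.
lia.
Qed.

Lemma kidx_inj (k n : nat) : injective (@kidx k n).
Proof.
elim: k => [|k IH] j1 j2; first by move=> _; apply/ffunP => -[].
rewrite !kidxS => e.
set t1 := [ffun t => _] in e; set t2 := [ffun t => _] in e.
have lt1 := kidx_lt t1; have lt2 := kidx_lt t2.
have e0 : j1 ord0 = j2 ord0.
  have nk_gt0 : (0 < n ^ k)%N by move: lt1; case: (n ^ k)%N.
  apply: val_inj; move: (congr1 (fun x => x %/ n ^ k)%N e).
  by rewrite !divnMDl ?divn_small ?addn0.
have /IH e1 : kidx t1 = kidx t2 by move: e; rewrite e0 => /addnI.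
apply/ffunP => t; case: (unliftP ord0 t) => [t'|] -> //.
by move/ffunP: e1 => /(_ t'); rewrite !ffunE.
Qed.

Definition kord (k n : nat) (j : {ffun 'I_k -> 'I_n}) : 'I_(n ^ k) :=
  Ordinal (kidx_lt j).

Lemma kord_bij (k n : nat) : bijective (@kord k n).
Proof.
apply: inj_card_bij; last by rewrite card_ffun !card_ord.
by move=> j1 j2 /(congr1 val) /kidx_inj.
Qed.

Section KroneckerNorms.
Variable R : rcfType.

Lemma vsqnorm_ge0 N (v : 'cV[R]_N) : 0 <= vsqnorm v.
Proof. by apply: sumr_ge0 => i _; rewrite sqr_ge0. Qed.

Lemma vsqnorm0 N : vsqnorm (0 : 'cV[R]_N) = 0.
Proof. by rewrite /vsqnorm big1 // => i _; rewrite mxE expr0n. Qed.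

Lemma vsqnorm_eq0 N (v : 'cV[R]_N) : (vsqnorm v == 0) = (v == 0).
Proof.
apply/eqP/eqP => [v0|->]; last exact: vsqnorm0.
apply/matrixP => i j; rewrite (ord1 j) mxE.
have /psumr_eq0P : \sum_(i < N) v i 0 ^+ 2 = 0 := v0.
by move=> /(_ (fun i _ => sqr_ge0 _) i isT) /eqP; rewrite sqrf_eq0 => /eqP.
Qed.

Lemma vsqnormZ N (a : R) (v : 'cV[R]_N) : vsqnorm (a *: v) = a ^+ 2 * vsqnorm v.
Proof. by rewrite /vsqnorm mulr_sumr; apply: eq_bigr => i _; rewrite mxE exprMn. Qed.

Lemma vsqnorm_delta N (i : 'I_N) : vsqnorm (delta_mx i 0 : 'cV[R]_N) = 1.
Proof.
rewrite /vsqnorm (bigD1 i) //= big1 => [|r /negbTE ri]; rewrite mxE eqxx ?ri /=.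
  by rewrite expr1n addr0.
by rewrite expr0n.
Qed.

Lemma kron_kord k n (x : 'I_k -> 'cV[R]_n) (j : {ffun 'I_k -> 'I_n}) :
  kron x (kord j) 0 = \prod_t x t (j t) 0.
Proof.
rewrite mxE (bigD1 j) //= eqxx [X in _ + X]big1 ?addr0 // => j' /negbTE j'j.
by case: eqP => // /kidx_inj ej; rewrite ej eqxx in j'j.
Qed.

Lemma vsqnorm_kron k n (x : 'I_k -> 'cV[R]_n) :
  vsqnorm (kron x) = \prod_t vsqnorm (x t).
Proof.
rewrite /vsqnorm bigA_distr_bigA /= (reindex _ (onW_bij _ (@kord_bij k n))) /=.
by apply: eq_bigr => j _; rewrite kron_kord prodrXl.
Qed.

Lemma kronZ k n (a : 'I_k -> R) (x y : 'I_k -> 'cV[R]_n) :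
  (forall t, x t = a t *: y t) -> kron x = (\prod_t a t) *: kron y.
Proof.
move=> xy; apply/matrixP => r c; rewrite !mxE mulr_sumr; apply: eq_bigr => j _.
case: ifP => _; last by rewrite mulr0.
by rewrite -big_split; apply: eq_bigr => t _; rewrite xy mxE.
Qed.

End KroneckerNorms.

Section RestrictedIsometry.
Variables (R : rcfType) (m N : nat) (A : 'M[R]_(m, N)) (eps : R).

Lemma RIP_sub (S S' : 'cV[R]_N -> Prop) :
  (forall s, S s -> S' s) -> RIP A eps S' -> RIP A eps S.
Proof. by move=> sub hA s /sub /hA. Qed.

Lemma RIP_scale (S : 'cV[R]_N -> Prop) s (a : R) : RIP A eps S -> S s ->
  (1 - eps) * vsqnorm (a *: s) <= vsqnorm (A *m (a *: s))
  <= (1 + eps) * vsqnorm (a *: s).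
Proof.
move=> hA /hA /andP[lo hi]; have a2_ge0 : 0 <= a ^+ 2 := sqr_ge0 a.
by rewrite -scalemxAr !vsqnormZ !(mulrCA _ (a ^+ 2)) !ler_wpM2l.
Qed.

Lemma RIP_ge0 (S : 'cV[R]_N -> Prop) s :
  RIP A eps S -> S s -> vsqnorm s = 1 -> 0 <= eps.
Proof. by move=> hA /hA + s1; rewrite s1 !mulr1 => /andP[lo hi]; lra. Qed.

End RestrictedIsometry.

Section KroneckerRIP.
Variables (R : rcfType) (m k n : nat) (A : 'M[R]_(m, n ^ k)) (eps : R).
Hypothesis hA : RIP A eps (@S1 R k n).

Lemma RIP_S1_kron (x : 'I_k -> 'cV[R]_n) :
  (1 - eps) * vsqnorm (kron x) <= vsqnorm (A *m kron x)
  <= (1 + eps) * vsqnorm (kron x).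
Proof.
have [/existsP[t /eqP xt0]|/existsPn x_neq0] := boolP [exists t, x t == 0].
  have /eqP -> : kron x == 0.
    by rewrite -vsqnorm_eq0 vsqnorm_kron (bigD1 t) //= xt0 vsqnorm0 mul0r.
  by rewrite mulmx0 !vsqnorm0 !mulr0 lexx.
pose r t := Num.sqrt (vsqnorm (x t)).
have x_gt0 t : 0 < vsqnorm (x t) by rewrite lt_def vsqnorm_eq0 x_neq0 vsqnorm_ge0.
have r_gt0 t : 0 < r t by rewrite sqrtr_gt0.
pose y t := (r t)^-1 *: x t.
have xy t : x t = r t *: y t by rewrite scalerA divff ?scale1r ?gt_eqF.
rewrite (kronZ xy); apply: (RIP_scale _ hA); exists y; split=> // t.
by rewrite vsqnormZ exprVn sqr_sqrtr ?mulVf ?gt_eqF // ltW.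
Qed.

Lemma RIP_S1_ge0 : (0 < n)%N -> 0 <= eps.
Proof.
move=> n_gt0; pose e0 : 'cV[R]_n := delta_mx (Ordinal n_gt0) 0.
have e0_unit : vsqnorm e0 = 1 by apply: vsqnorm_delta.
apply: (RIP_ge0 hA (s := kron (fun=> e0))); first by exists (fun=> e0).
by rewrite vsqnorm_kron big1.
Qed.

End KroneckerRIP.

Lemma ler_prod_scaled (R : numDomainType) (I : finType) (e : R) (a b : I -> R) :
  e <= 1 -> (forall i, 0 <= b i) ->
  (forall i, (1 - e) * b i <= a i <= (1 + e) * b i) ->
  (1 - e) ^+ #|I| * \prod_i b i <= \prod_i a i <= (1 + e) ^+ #|I| * \prod_i b i.
Proof.
move=> e_le1 b_ge0 ab; rewrite -!prodr_const -!big_split /=.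
have lo_ge0 i : 0 <= (1 - e) * b i by rewrite mulr_ge0 ?subr_ge0.
apply/andP; split; apply: ler_prod => i _; case/andP: (ab i) => lo hi.
  by rewrite lo_ge0 lo.
by rewrite (le_trans (lo_ge0 i) lo) hi.
Qed.

Lemma pow_within_delta (R : realDomainType) (e : R) (d k : nat) :
  (0 < d)%N -> (k <= d)%N -> 0 <= e ->
  let delta := Num.max ((1 + e) ^+ d - 1) (1 - (1 - e) ^+ d) in
  delta < 1 -> [/\ e < 1, 1 - delta <= (1 - e) ^+ k & (1 + e) ^+ k <= 1 + delta].
Proof.
move=> d_gt0 le_kd e_ge0 delta delta_lt1.
have e_lt1 : e < 1.
  have : 1 + e <= (1 + e) ^+ d by rewrite -{1}(expr1 (1 + e)) ler_weXn2l ?lerDl.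
  by move: delta_lt1; rewrite gt_max; lra.
split=> //.
  apply: le_trans (_ : (1 - e) ^+ d <= _); first by rewrite lerBlDr -lerBlDl le_max lexx orbT.
  by rewrite ler_wiXn2l //; lra.
apply: le_trans (_ : _ <= (1 + e) ^+ d) _; first by rewrite ler_weXn2l ?lerDl.
by rewrite -lerBlDl le_max lexx.
Qed.

Lemma prod_if_zero (R : comPzSemiRingType) (I : finType) (P : pred I) (F : I -> R) :
  \prod_i (if P i then F i else 0) = if [forall i, P i] then \prod_i F i else 0.
Proof.
case: ifP => [/forallP allP|/negbT/forallPn[i /negbTE Pi]].
  by apply: eq_bigr => i _; rewrite allP.
by rewrite (bigD1 i) //= Pi mul0r.
Qed.

Section RankOne.
Variable R : rcfType.

Lemma tsqnorm_rank1 D p (T : tensor R D p) (c : R) (v : 'I_D -> 'cV[R]_p) :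
  (forall I, T I = c * \prod_a v a (I a) 0) ->
  tsqnorm T = c ^+ 2 * \prod_a vsqnorm (v a).
Proof.
move=> Tv; rewrite /tsqnorm /vsqnorm bigA_distr_bigA mulr_sumr.
by apply: eq_bigr => I _; rewrite Tv exprMn prodrXl.
Qed.

Lemma Aop_rank1 D N m (A : 'I_D -> 'M[R]_(m, N)) (Y : tensor R D N) (c : R)
    (v : 'I_D -> 'cV[R]_N) :
  (forall J, Y J = c * \prod_i v i (J i) 0) ->
  forall L, Aop A Y L = c * \prod_i (A i *m v i) (L i) 0.
Proof.
move=> Yv L; rewrite ffunE.
transitivity (c * \sum_(J : {ffun 'I_D -> 'I_N}) \prod_i (v i (J i) 0 * A i (L i) (J i))).
  by rewrite mulr_sumr; apply: eq_bigr => J _; rewrite Yv big_split /= mulrA.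
rewrite -(bigA_distr_bigA (fun i j => v i j 0 * A i (L i) j)); congr (c * _).
by apply: eq_bigr => i _; rewrite mxE; apply: eq_bigr => j _; rewrite mulrC.
Qed.

End RankOne.

Section Blocks.
Variables kap d : nat.
Hypotheses (kap_gt0 : (0 < kap)%N) (kap_dvd_d : (kap %| d)%N).
Local Notation d' := (d %/ kap)%N.

Lemma block_ord_subproof (i : 'I_d') (t : 'I_kap) : (i * kap + t < d)%N.
Proof.
have : (i.+1 * kap <= d' * kap)%N by rewrite leq_mul2r ltn_ord orbT.
by rewrite divnK // mulSn; have := ltn_ord t; lia.
Qed.

Definition block_ord (i : 'I_d') (t : 'I_kap) : 'I_d :=
  Ordinal (block_ord_subproof i t).

Lemma block_idx_subproof (a : 'I_d) : (a %/ kap < d')%N.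
Proof. by rewrite ltn_divLR // divnK. Qed.

Definition block_idx (a : 'I_d) : 'I_d' := Ordinal (block_idx_subproof a).
Definition block_off (a : 'I_d) : 'I_kap := Ordinal (ltn_pmod a kap_gt0).

Lemma block_idx_ord i t : block_idx (block_ord i t) = i.
Proof. by apply: val_inj; rewrite /= divnMDl // [(t %/ kap)%N]divn_small ?addn0. Qed.

Lemma block_off_ord i t : block_off (block_ord i t) = t.
Proof. by apply: val_inj; rewrite /= modnMDl modn_small. Qed.

Lemma block_ord_idx a : block_ord (block_idx a) (block_off a) = a.
Proof. by apply: val_inj; rewrite /= -divn_eq. Qed.

Lemma prod_blocks (R : comPzSemiRingType) (F : 'I_d -> R) :
  \prod_a F a = \prod_i \prod_t F (block_ord i t).
Proof.
rewrite pair_big (reindex (fun p : 'I_d' * 'I_kap => block_ord p.1 p.2)) //=.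
exists (fun a => (block_idx a, block_off a)) => [[i t] _|a _] /=.
  by rewrite block_idx_ord block_off_ord.
by rewrite block_ord_idx.
Qed.

Lemma Inat_block n (I : {ffun 'I_d -> 'I_n}) (i : 'I_d') (t : 'I_kap) :
  Inat I (i * kap + t) = val (I (block_ord i t)).
Proof.
rewrite /Inat; case: insubP => [a _ ea|]; last by rewrite block_ord_subproof.
by congr (val (I _)); apply: val_inj; rewrite ea.
Qed.

Definition block_uncurry n (F : {ffun 'I_d' -> {ffun 'I_kap -> 'I_n}}) :
    {ffun 'I_d -> 'I_n} :=
  [ffun a => F (block_idx a) (block_off a)].

Lemma block_uncurry_bij n : bijective (@block_uncurry n).
Proof.
exists (fun I : {ffun 'I_d -> 'I_n} => [ffun i => [ffun t => I (block_ord i t)]]) => [F|I].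
  by apply/ffunP => i; apply/ffunP => t; rewrite !ffunE block_idx_ord block_off_ord.
by apply/ffunP => a; rewrite !ffunE block_ord_idx.
Qed.

Lemma reshape_match_uncurry n (F : {ffun 'I_d' -> {ffun 'I_kap -> 'I_n}})
    (J : {ffun 'I_d' -> 'I_(n ^ kap)}) :
  reshape_match (block_uncurry F) J = [forall i, val (J i) == kidx (F i)].
Proof.
apply: eq_forallb => i; congr (_ == _); apply: eq_bigr => t _.
by rewrite Inat_block ffunE block_idx_ord block_off_ord.
Qed.

Lemma treshape_rank1 (R : rcfType) n (X : tensor R d n) (c : R)
    (u : 'I_d -> 'cV[R]_n) :
  (forall I, X I = c * \prod_a u a (I a) 0) ->
  forall J, treshape kap X J = c * \prod_i kron (fun t => u (block_ord i t)) (J i) 0.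
Proof.
move=> Xu J; rewrite ffunE (reindex _ (onW_bij _ (@block_uncurry_bij n))) /=.
pose G i (j : {ffun 'I_kap -> 'I_n}) :=
  if val (J i) == kidx j then \prod_t u (block_ord i t) (j t) 0 else 0.
transitivity (c * \prod_i \sum_j G i j); last first.
  by congr (c * _); apply: eq_bigr => i _; rewrite mxE.
rewrite bigA_distr_bigA mulr_sumr; apply: eq_bigr => F _.
rewrite reshape_match_uncurry prod_if_zero; case: ifP => _; last by rewrite mulr0.
rewrite Xu prod_blocks; congr (c * _).
by apply: eq_bigr => i _; apply: eq_bigr => t _; rewrite ffunE block_idx_ord block_off_ord.
Qed.

End Blocks.

Theorem proposition1 (R : rcfType) (d n kappa m : nat)
  (hd : (0 < d)%N) (hn : (0 < n)%N) (hk : (0 < kappa)%N) (hkd : (kappa %| d)%N)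
  (A : 'I_(d %/ kappa) -> 'M[R]_(m, n ^ kappa)) (eps : R)
  (hA : forall i, RIP (A i) eps (@S12 R kappa n))
  (hdelta : Num.max ((1 + eps) ^+ d - 1) (1 - (1 - eps) ^+ d) < 1) :
  forall X : tensor R d n, hosvd_rank1 X ->
    let delta := Num.max ((1 + eps) ^+ d - 1) (1 - (1 - eps) ^+ d) in
    (1 - delta) * tsqnorm X <= tsqnorm (Aop A (treshape kappa X)) <=
    (1 + delta) * tsqnorm X.
Proof.
move=> X [_ [c [u Xu]]]; cbv zeta; set delta := Num.max _ _.
have hA1 i : RIP (A i) eps (@S1 R kappa n) by apply: RIP_sub (hA i) => s; left.
pose x i t := u (block_ord hk hkd i t).
pose P := \prod_i vsqnorm (kron (x i)).
pose Q := \prod_i vsqnorm (A i *m kron (x i)).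
have -> : tsqnorm X = c ^+ 2 * P.
  rewrite (tsqnorm_rank1 Xu) (prod_blocks hk hkd); congr (_ * _).
  by apply: eq_bigr => i _; rewrite vsqnorm_kron.
rewrite (tsqnorm_rank1 (Aop_rank1 A (treshape_rank1 hk hkd Xu))) -/Q.
have d'_gt0 : (0 < d %/ kappa)%N by rewrite divn_gt0 // dvdn_leq.
have eps_ge0 : 0 <= eps := RIP_S1_ge0 (hA1 (Ordinal d'_gt0)) hn.
have [eps_lt1 delta_lo delta_hi] := pow_within_delta hd (leq_div d kappa) eps_ge0 hdelta.
have /andP[PQ_lo PQ_hi] : (1 - eps) ^+ (d %/ kappa) * P <= Q <= (1 + eps) ^+ (d %/ kappa) * P.
  rewrite -(card_ord (d %/ kappa)); apply: ler_prod_scaled => [||i]; first exact: ltW.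
    by move=> i; apply: vsqnorm_ge0.
  exact: RIP_S1_kron.
have P_ge0 : 0 <= P by apply: prodr_ge0 => i _; apply: vsqnorm_ge0.
rewrite !(mulrCA _ (c ^+ 2)) !ler_wpM2l ?sqr_ge0 //.
  exact: le_trans PQ_hi (ler_wpM2r P_ge0 delta_hi).
exact: le_trans (ler_wpM2r P_ge0 delta_lo) PQ_lo.
Qed.
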